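(* Let $\tilde{\mathbf{M}}$ be a real $n\times n$ skew-symmetric matrix. Then the optimization problem $\min_{\mathbf{M}\in\mathcal{M}_T(n)}\|\tilde{\mathbf{M}}-\mathbf{M}\|_F^2$ has the closed-form solution $\mathbf{M}^\ast=(\tilde{\mathbf{M}}\mathds{1}+\mathds{1}\tilde{\mathbf{M}})/n$.
   Context: $\mathds{1}$ is the $n\times n$ all-ones matrix; $\|\cdot\|_F$ is the Frobenius norm. A TDOA matrix is an $n\times n$ real matrix whose $(i,j)$ entry is $\tau_i-\tau_j$ for some $(\tau_1,\dots,\tau_n)\in\mathbb{R}^n$; $\mathcal{M}_T(n)$ is the set of all $n\times n$ TDOA matrices. In the paper $\tilde{\mathbf{M}}$ is a measured TDOA matrix, $\tilde{\mathbf{M}}=\mathbf{M}+\mathbf{N}$ with $\mathbf{M}\in\mathcal{M}_T(n)$ and $\mathbf{N}$ a skew-symmetric noise matrix, hence skew-symmetric. *)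

From mathcomp Require Import all_boot all_order all_algebra.
Set Implicit Arguments. Unset Strict Implicit. Unset Printing Implicit Defensive.
Import Order.TTheory GRing.Theory Num.Theory.
Local Open Scope ring_scope.

Definition ones_mx (R : nzRingType) (n : nat) : 'M[R]_n := const_mx 1.

Definition frob2 (R : nzRingType) (n : nat) (A : 'M[R]_n) : R :=
  \sum_(i < n) \sum_(j < n) (A i j) ^+ 2.

Definition is_tdoa (R : nzRingType) (n : nat) (M : 'M[R]_n) : Prop :=
  exists tau : 'I_n -> R, forall i j, M i j = tau i - tau j.

From mathcomp Require Import all_boot all_order all_algebra.
From mathcomp Require Import ring.

Set Implicit Arguments.
Unset Strict Implicit.
Unset Printing Implicit Defensive.
Import Order.TTheory GRing.Theory Num.Theory.
Local Open Scope ring_scope.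

(* The residual E := Mt - M* of a skew-symmetric Mt has zero row and column
   sums, hence is Frobenius-orthogonal to every TDOA matrix, because
   sum_ij E_ij (s_i - s_j) = sum_i s_i (row sum i) - sum_j s_j (column sum j).
   As M* is itself a TDOA matrix and differences of TDOA matrices are TDOA,
   Pythagoras gives ||Mt - M||^2 = ||Mt - M*||^2 + ||M* - M||^2 for every
   TDOA matrix M. *)

Section Frobenius.
Variables (R : realDomainType) (n : nat).
Implicit Type A : 'M[R]_n.

Lemma frob2_ge0 A : 0 <= frob2 A.
Proof. by apply: sumr_ge0 => i _; apply: sumr_ge0 => j _; rewrite sqr_ge0. Qed.

Lemma frob2_eq0 A : frob2 A = 0 -> A = 0.
Proof.
move=> A0; apply/matrixP => i j; rewrite mxE.
have row0 : \sum_(l < n) A i l ^+ 2 = 0.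
  apply: (psumr_eq0P _ A0) => // k _.
  by apply: sumr_ge0 => l _; rewrite sqr_ge0.
by apply/eqP; rewrite -sqrf_eq0; apply/eqP/(psumr_eq0P _ row0) => // l _; rewrite sqr_ge0.
Qed.

End Frobenius.

Section TDOA.
Variables (R : comNzRingType) (n : nat).
Implicit Types A D M N : 'M[R]_n.

Lemma is_tdoaB M N : is_tdoa M -> is_tdoa N -> is_tdoa (M - N).
Proof.
move=> [s Ms] [t Nt]; exists (fun i => s i - t i) => i j.
by rewrite !mxE Ms Nt; ring.
Qed.

Lemma frob2D A D :
  frob2 (A + D) = frob2 A + frob2 D + 2 * \sum_i \sum_j A i j * D i j.
Proof.
rewrite /frob2 mulr_sumr -!big_split /=; apply: eq_bigr => i _.
rewrite mulr_sumr -!big_split /=; apply: eq_bigr => j _.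
by rewrite mxE; ring.
Qed.

Lemma tdoa_orthogonal A D :
  (forall i, \sum_j A i j = 0) -> (forall j, \sum_i A i j = 0) -> is_tdoa D ->
  \sum_i \sum_j A i j * D i j = 0.
Proof.
move=> rowA colA [s Ds].
under eq_bigr do under eq_bigr do rewrite Ds mulrBr.
under eq_bigr do rewrite sumrB -mulr_suml rowA mul0r sub0r.
rewrite sumrN exchange_big /=; apply/eqP; rewrite oppr_eq0; apply/eqP/big1 => j _.
by rewrite -mulr_suml colA mul0r.
Qed.

Lemma frob2_tdoa_pythagoras A D :
  (forall i, \sum_j A i j = 0) -> (forall j, \sum_i A i j = 0) -> is_tdoa D ->
  frob2 (A + D) = frob2 A + frob2 D.
Proof. by move=> rowA colA tD; rewrite frob2D tdoa_orthogonal // mulr0 addr0. Qed.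

End TDOA.

Section SkewProjection.
Variables (R : numFieldType) (n : nat) (Mt : 'M[R]_n).
Hypothesis Mt_skew : Mt^T = - Mt.

Local Notation row_sum i := (\sum_k Mt i k).
Local Notation Mstar := ((n%:R)^-1 *: (Mt *m ones_mx R n + ones_mx R n *m Mt)).

Lemma skew_entry i j : Mt j i = - Mt i j.
Proof. by have /matrixP/(_ i j) := Mt_skew; rewrite !mxE. Qed.

Lemma skew_sum0 : \sum_i row_sum i = 0.
Proof.
apply/eqP; rewrite -eqNr; apply/eqP.
rewrite [RHS]exchange_big -sumrN; apply: eq_bigr => i _.
by rewrite -sumrN; apply: eq_bigr => k _; rewrite (skew_entry i k).
Qed.

Lemma tdoa_proj_entry i j : Mstar i j = (n%:R)^-1 * (row_sum i - row_sum j).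
Proof.
rewrite !mxE /ones_mx; congr (_ * (_ + _)).
  by apply: eq_bigr => k _; rewrite mxE mulr1.
by rewrite -sumrN; apply: eq_bigr => k _; rewrite mxE mul1r (skew_entry j k).
Qed.

Lemma is_tdoa_proj : is_tdoa Mstar.
Proof.
by exists (fun i => (n%:R)^-1 * row_sum i) => i j; rewrite tdoa_proj_entry mulrBr.
Qed.

Lemma proj_residual_entry i j :
  (Mt - Mstar) i j = Mt i j - (n%:R)^-1 * (row_sum i - row_sum j).
Proof. by rewrite 2!mxE tdoa_proj_entry. Qed.

Lemma proj_residual_row0 i : \sum_j (Mt - Mstar) i j = 0.
Proof.
have nR0 : n%:R != 0 :> R by rewrite pnatr_eq0 -lt0n (leq_ltn_trans (leq0n i)).
under eq_bigr do rewrite proj_residual_entry.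
rewrite sumrB -mulr_sumr sumrB skew_sum0 subr0 sumr_const card_ord.
set s := \sum_k Mt i k.
by rewrite -[s *+ n]mulr_natl mulKf // subrr.
Qed.

Lemma proj_residual_col0 j : \sum_i (Mt - Mstar) i j = 0.
Proof.
transitivity (- \sum_i (Mt - Mstar) j i); last by rewrite proj_residual_row0 oppr0.
rewrite -sumrN; apply: eq_bigr => i _.
by rewrite !proj_residual_entry skew_entry; ring.
Qed.

End SkewProjection.

Theorem theorem3 (R : realFieldType) (n : nat) (Mt : 'M[R]_n) :
  Mt^T = - Mt ->
  let Mstar := (n%:R)^-1 *: (Mt *m ones_mx R n + ones_mx R n *m Mt) in
  [/\ is_tdoa Mstar,
      (forall M : 'M[R]_n, is_tdoa M -> frob2 (Mt - Mstar) <= frob2 (Mt - M))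
    & (forall M : 'M[R]_n, is_tdoa M -> frob2 (Mt - M) <= frob2 (Mt - Mstar) ->
         M = Mstar)].
Proof.
move=> Mt_skew Mstar.
have pythagoras M : is_tdoa M ->
    frob2 (Mt - M) = frob2 (Mt - Mstar) + frob2 (Mstar - M).
  move=> tM; rewrite -frob2_tdoa_pythagoras.
  - by rewrite addrA subrK.
  - exact: proj_residual_row0.
  - exact: proj_residual_col0.
  - exact: is_tdoaB (is_tdoa_proj Mt_skew) tM.
split=> [|M tM|M tM]; first exact: is_tdoa_proj.
  by rewrite (pythagoras M tM) lerDl frob2_ge0.
rewrite (pythagoras M tM) gerDl => le0.
have /frob2_eq0/eqP : frob2 (Mstar - M) = 0 by apply/eqP; rewrite eq_le le0 frob2_ge0.
by rewrite subr_eq0 => /eqP.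
Qed.
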